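(* Let $H$ be an infinite finitely generated amenable group and let $F_2$ be the free group on two generators. There exists a faithful, transitive action of $F_2$ by permutations on the set $H$ such that every $H$-invariant mean on $H$ is $F_2$-invariant.
   Context: A mean on $H$ is a finitely additive $\mu:2^H\to[0,1]$ with $\mu(H)=1$; it is $H$-invariant if $\mu(hA)=\mu(A)$ for all $h\in H$, $A\subseteq H$ (invariance under left multiplication), and $F_2$-invariant if $\mu(gA)=\mu(A)$ for all $g\in F_2$. Faithful means every nontrivial element of $F_2$ moves some point. *)

From Stdlib Require Import Reals List.
Open Scope R_scope.

Definition is_group {H : Type} (mul : H -> H -> H) (one : H) (inv : H -> H) : Prop :=
  (forall x y z, mul (mul x y) z = mul x (mul y z)) /\
  (forall x, mul one x = x) /\ (forall x, mul x one = x) /\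
  (forall x, mul (inv x) x = one) /\ (forall x, mul x (inv x) = one).

Definition infinite_type (H : Type) : Prop :=
  ~ exists l : list H, forall x : H, In x l.

Inductive generated {H : Type} (mul : H -> H -> H) (one : H) (inv : H -> H)
  (S : H -> Prop) : H -> Prop :=
| gen_base : forall x, S x -> generated mul one inv S x
| gen_one : generated mul one inv S one
| gen_mul : forall x y, generated mul one inv S x -> generated mul one inv S y ->
            generated mul one inv S (mul x y)
| gen_inv : forall x, generated mul one inv S x -> generated mul one inv S (inv x).

Definition finitely_generated {H : Type} (mul : H -> H -> H) (one : H) (inv : H -> H) : Prop :=
  exists l : list H, forall x, generated mul one inv (fun s => In s l) x.

Definition set_union {H : Type} (A B : H -> Prop) : H -> Prop := fun x => A x \/ B x.
Definition set_disjoint {H : Type} (A B : H -> Prop) : Prop := forall x, ~ (A x /\ B x).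
Definition set_full (H : Type) : H -> Prop := fun _ => True.
Definition image {H : Type} (f : H -> H) (A : H -> Prop) : H -> Prop :=
  fun y => exists x, A x /\ y = f x.

(** A mean on H: finitely additive mu : 2^H -> [0,1] with mu(H) = 1.
    (Since sets are predicates, we also require mu to depend only on the
    extension of the set, which is automatic for genuine sets.) *)
Definition is_mean {H : Type} (mu : (H -> Prop) -> R) : Prop :=
  (forall A B, (forall x, A x <-> B x) -> mu A = mu B) /\
  (forall A, 0 <= mu A <= 1) /\
  mu (set_full H) = 1 /\
  (forall A B, set_disjoint A B -> mu (set_union A B) = mu A + mu B).

Definition H_invariant_mean {H : Type} (mul : H -> H -> H) (mu : (H -> Prop) -> R) : Prop :=
  is_mean mu /\ forall (h : H) (A : H -> Prop), mu (image (mul h) A) = mu A.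

Definition amenable {H : Type} (mul : H -> H -> H) : Prop :=
  exists mu, H_invariant_mean mul mu.

(** The free group F_2 on generators a, b: elements are reduced words in the
    letters a, a^-1, b, b^-1.  A letter is (g, e) with g = true for a,
    g = false for b, and e = true for the inverse. *)
Definition letter := (bool * bool)%type.
Definition word := list letter.

Definition inverse_letters (l1 l2 : letter) : Prop :=
  fst l1 = fst l2 /\ snd l1 <> snd l2.

Fixpoint reduced (w : word) : Prop :=
  match w with
  | nil => True
  | l1 :: w' =>
      match w' with
      | nil => True
      | l2 :: _ => ~ inverse_letters l1 l2 /\ reduced w'
      end
  end.

(** An action of F_2 by permutations of H is (by the universal property of
    F_2) determined by two permutations pa, pb of H; we store each with its
    inverse. *)
Definition is_perm {H : Type} (p pinv : H -> H) : Prop :=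
  (forall x, p (pinv x) = x) /\ (forall x, pinv (p x) = x).

Definition act_letter {H : Type} (pa pai pb pbi : H -> H) (l : letter) : H -> H :=
  match l with
  | (true, false) => pa
  | (true, true) => pai
  | (false, false) => pb
  | (false, true) => pbi
  end.

Fixpoint act_word {H : Type} (pa pai pb pbi : H -> H) (w : word) (x : H) : H :=
  match w with
  | nil => x
  | l :: w' => act_letter pa pai pb pbi l (act_word pa pai pb pbi w' x)
  end.

Definition faithful_action {H : Type} (pa pai pb pbi : H -> H) : Prop :=
  forall w : word, reduced w -> w <> nil ->
    exists x : H, act_word pa pai pb pbi w x <> x.

Definition transitive_action {H : Type} (pa pai pb pbi : H -> H) : Prop :=
  forall x y : H, exists w : word, act_word pa pai pb pbi w x = y.

Definition F2_invariant {H : Type} (pa pai pb pbi : H -> H) (mu : (H -> Prop) -> R) : Prop :=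
  forall (w : word) (A : H -> Prop), mu (image (act_word pa pai pb pbi w) A) = mu A.

(** The action is built from the word length [wlen] of a finite generating list.
  - Coset part.  As H is infinite, every length occurs; pick [anchor i] of
    length (i+2)^2.  These sparse anchors are null for every invariant mean:
    for any finitely many distinct elements, a far tail of the anchors has
    pairwise disjoint translates.  The Schreier graph of F_2 on the cosets of
    <b> (reduced words empty or ending in a^{+-1}) is copied onto the anchors;
    there F_2 acts by concatenation, which makes the action faithful.
  - Tree part.  Every other point has a "tree parent": one geodesic step, or
    three when the first lands on an anchor.  Tree parents avoid the anchors,
    are shorter by an odd amount and are translates by an element of length
    at most 3.  A vertex of even (odd) length with its children forms a cycle
    of a (of b); the identity is exchanged by b with the base coset.
  - Invariance.  Off the null set "anchors + identity" each letter acts by left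
    multiplication with an element of the ball of radius 6, so by the wobbling
    lemma [wobbling_invariance] it preserves every invariant mean. *)

From Stdlib Require Import Reals List Lia Lra Arith Wf_nat.
From Stdlib Require Import Classical ClassicalEpsilon.
Import ListNotations.
Local Open Scope nat_scope.

Definition pdec (P : Prop) : {P} + {~ P} := excluded_middle_informative P.

Lemma least_witness (P : nat -> Prop) :
  (exists n, P n) -> exists n, P n /\ forall m, P m -> n <= m.
Proof.
  intro hex.
  destruct (dec_inh_nat_subset_has_unique_least_element P (fun n => classic (P n)) hex)
    as [n [hn _]].
  exists n. exact hn.
Qed.

Lemma infinite_nodup_list (T : Type) (k : nat) :
  infinite_type T -> exists l : list T, length l = k /\ NoDup l.
Proof.
  intro hinf. induction k as [|k [l [hl hn]]].
  - exists []. split; [reflexivity | constructor].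
  - assert (exists x, ~ In x l) as [x hx].
    { apply NNPP. intro h. apply hinf. exists l. intro x.
      apply NNPP. intro h'. apply h. exists x. exact h'. }
    exists (x :: l). split; [simpl; lia | constructor; assumption].
Qed.

Lemma Rle_multiples_zero (m : R) :
  (0 <= m)%R -> (forall k, (INR (S k) * m <= 1)%R) -> m = 0%R.
Proof.
  intros h0 hk. destruct (Rle_lt_or_eq_dec 0 m h0) as [hp | he]; [| symmetry; exact he].
  exfalso. destruct (INR_unbounded (1 / m)) as [n hn]. specialize (hk n).
  rewrite S_INR in hk.
  assert (hnm : (INR n * m > 1)%R).
  { apply (Rmult_gt_compat_r m) in hn; [| exact hp]. unfold Rdiv in hn.
    rewrite Rmult_assoc, Rinv_l, Rmult_1_r in hn by lra. lra. }
  lra.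
Qed.

(** ** Cyclic permutations of duplicate-free lists *)

Section CyclicLists.
Context {T : Type}.

(** Position of [x] in [l] (or [length l] if absent). *)
Fixpoint position (l : list T) (x : T) : nat :=
  match l with
  | [] => 0
  | y :: l' => if pdec (y = x) then 0 else S (position l' x)
  end.

Lemma position_lt l x : In x l -> position l x < length l.
Proof.
  induction l as [|y l IH]; simpl; [intros [] |]. intros [<- | h].
  - destruct (pdec (y = y)) as [_ | n]; [lia | congruence].
  - destruct (pdec (y = x)); [lia |]. specialize (IH h). lia.
Qed.

Lemma nth_position l x d : In x l -> nth (position l x) l d = x.
Proof.
  induction l as [|y l IH]; simpl; [intros [] |]. intro h.
  destruct (pdec (y = x)) as [ee | n]; [exact ee |].
  destruct h as [h | h]; [congruence | apply IH, h].
Qed.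

Lemma position_nth l i d : NoDup l -> i < length l -> position l (nth i l d) = i.
Proof.
  revert i. induction l as [|y l IH]; intros i hn hi; simpl in hi; [lia |].
  inversion hn as [| y' l' hy hn']; subst. destruct i as [|i]; simpl.
  - destruct (pdec (y = y)) as [_ | n]; [reflexivity | congruence].
  - destruct (pdec (y = nth i l d)) as [ee | _].
    + exfalso. apply hy. rewrite ee. apply nth_In. lia.
    + rewrite IH; [reflexivity | exact hn' | lia].
Qed.

Definition succ_mod (n i : nat) : nat := if Nat.ltb (S i) n then S i else 0.
Definition pred_mod (n i : nat) : nat := match i with 0 => n - 1 | S i' => i' end.

Lemma succ_mod_lt n i : i < n -> succ_mod n i < n.
Proof. unfold succ_mod. intro h. destruct (Nat.ltb_spec (S i) n); lia. Qed.
Lemma pred_mod_lt n i : i < n -> pred_mod n i < n.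
Proof. unfold pred_mod. intro h. destruct i; lia. Qed.
Lemma pred_succ_mod n i : i < n -> pred_mod n (succ_mod n i) = i.
Proof. unfold succ_mod, pred_mod. intro h. destruct (Nat.ltb_spec (S i) n); lia. Qed.
Lemma succ_pred_mod n i : i < n -> succ_mod n (pred_mod n i) = i.
Proof.
  unfold succ_mod, pred_mod. intro h.
  destruct i as [|i]; [destruct (Nat.ltb_spec (S (n - 1)) n) | destruct (Nat.ltb_spec (S i) n)];
    lia.
Qed.

Definition cyc_next (l : list T) (x : T) : T :=
  match pdec (In x l) with
  | left _ => nth (succ_mod (length l) (position l x)) l x
  | right _ => x
  end.
Definition cyc_prev (l : list T) (x : T) : T :=
  match pdec (In x l) with
  | left _ => nth (pred_mod (length l) (position l x)) l x
  | right _ => x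
  end.

Lemma cyc_next_eq l x d :
  In x l -> cyc_next l x = nth (succ_mod (length l) (position l x)) l d.
Proof.
  intro h. unfold cyc_next. destruct (pdec (In x l)) as [_ | n]; [| contradiction].
  apply nth_indep, succ_mod_lt, position_lt, h.
Qed.
Lemma cyc_prev_eq l x d :
  In x l -> cyc_prev l x = nth (pred_mod (length l) (position l x)) l d.
Proof.
  intro h. unfold cyc_prev. destruct (pdec (In x l)) as [_ | n]; [| contradiction].
  apply nth_indep, pred_mod_lt, position_lt, h.
Qed.

Lemma cyc_next_in l x : In x l -> In (cyc_next l x) l.
Proof.
  intro h. rewrite (cyc_next_eq l x x h). apply nth_In, succ_mod_lt, position_lt, h.
Qed.
Lemma cyc_prev_in l x : In x l -> In (cyc_prev l x) l.
Proof.
  intro h. rewrite (cyc_prev_eq l x x h). apply nth_In, pred_mod_lt, position_lt, h.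
Qed.

Lemma cyc_prev_next l x : NoDup l -> In x l -> cyc_prev l (cyc_next l x) = x.
Proof.
  intros hn h. rewrite (cyc_prev_eq l _ x) by (apply cyc_next_in, h).
  rewrite (cyc_next_eq l x x h), position_nth by (auto using succ_mod_lt, position_lt).
  rewrite pred_succ_mod by (apply position_lt, h). apply nth_position, h.
Qed.

Lemma cyc_next_prev l x : NoDup l -> In x l -> cyc_next l (cyc_prev l x) = x.
Proof.
  intros hn h. rewrite (cyc_next_eq l _ x) by (apply cyc_prev_in, h).
  rewrite (cyc_prev_eq l x x h), position_nth by (auto using pred_mod_lt, position_lt).
  rewrite succ_pred_mod by (apply position_lt, h). apply nth_position, h.
Qed.

Lemma iter_cyc_next l d : NoDup l -> forall t i, i + t < length l ->
  Nat.iter t (cyc_next l) (nth i l d) = nth (i + t) l d.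
Proof.
  intros hn t. induction t as [|t IH]; intros i hi; simpl.
  - rewrite Nat.add_0_r. reflexivity.
  - rewrite IH, (cyc_next_eq l _ d), position_nth by (try apply nth_In; first [assumption | lia]).
    unfold succ_mod. destruct (Nat.ltb_spec (S (i + t)) (length l)); [| lia].
    f_equal. lia.
Qed.

Lemma cyc_next_last l d : NoDup l -> 0 < length l ->
  cyc_next l (nth (length l - 1) l d) = nth 0 l d.
Proof.
  intros hn hl.
  rewrite (cyc_next_eq l _ d), position_nth by (try apply nth_In; first [assumption | lia]).
  unfold succ_mod. destruct (Nat.ltb_spec (S (length l - 1)) (length l)); [lia | reflexivity].
Qed.

Lemma cyc_next_connects l x y : NoDup l -> In x l -> In y l ->
  exists t, Nat.iter t (cyc_next l) x = y.
Proof.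
  intros hn hx hy.
  assert (hi : position l x < length l) by (apply position_lt, hx).
  assert (hj : position l y < length l) by (apply position_lt, hy).
  rewrite <- (nth_position l x x hx), <- (nth_position l y x hy).
  set (i := position l x) in *. set (j := position l y) in *.
  destruct (le_lt_dec i j) as [lij | lij].
  - exists (j - i). rewrite iter_cyc_next by (auto; lia). f_equal. lia.
  - exists (j + (1 + (length l - 1 - i))). rewrite !Nat.iter_add.
    rewrite iter_cyc_next by (auto; lia).
    replace (i + (length l - 1 - i)) with (length l - 1) by lia.
    simpl. rewrite cyc_next_last, iter_cyc_next by (auto; lia). reflexivity.
Qed.

(** Rotating every
    cycle then defines a permutation of [D] whose orbits are the cycles. *)
Section CyclePartition.
Variables (D : T -> Prop) (owner : T -> T) (cycle : T -> list T).
Hypothesis cycle_nodup : forall v, NoDup (cycle v).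
Hypothesis owner_cycle : forall x, D x -> In x (cycle (owner x)).
Hypothesis cycle_owner : forall x y, D x -> In y (cycle (owner x)) ->
  D y /\ owner y = owner x.

Definition rotate (x : T) : T := cyc_next (cycle (owner x)) x.
Definition unrotate (x : T) : T := cyc_prev (cycle (owner x)) x.

Lemma rotate_cycle x : D x -> In (rotate x) (cycle (owner x)).
Proof. intro h. apply cyc_next_in, owner_cycle, h. Qed.
Lemma unrotate_cycle x : D x -> In (unrotate x) (cycle (owner x)).
Proof. intro h. apply cyc_prev_in, owner_cycle, h. Qed.

Lemma unrotate_rotate x : D x -> unrotate (rotate x) = x.
Proof.
  intro h. destruct (cycle_owner x _ h (rotate_cycle x h)) as [_ ho].
  unfold unrotate. rewrite ho. apply cyc_prev_next; auto.
Qed.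

Lemma rotate_unrotate x : D x -> rotate (unrotate x) = x.
Proof.
  intro h. destruct (cycle_owner x _ h (unrotate_cycle x h)) as [_ ho].
  unfold rotate. rewrite ho. apply cyc_next_prev; auto.
Qed.

Definition spin (back : bool) (x : T) : T := if back then unrotate x else rotate x.

Lemma spin_domain back x : D x -> D (spin back x) /\ owner (spin back x) = owner x.
Proof.
  intro h. apply (cycle_owner x _ h).
  destruct back; [apply unrotate_cycle | apply rotate_cycle]; exact h.
Qed.

Lemma spin_cycle back x : D x -> In (spin back x) (cycle (owner x)).
Proof. intro h. destruct back; [apply unrotate_cycle | apply rotate_cycle]; exact h. Qed.

Lemma spin_inv back x : D x -> spin (negb back) (spin back x) = x.
Proof. intro h. destruct back; [apply rotate_unrotate | apply unrotate_rotate]; exact h. Qed.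

Lemma rotate_connects (f : T -> T) x y :
  (forall z, D z -> f z = rotate z) -> D x -> In y (cycle (owner x)) ->
  exists t, Nat.iter t f x = y.
Proof.
  intros hf hx hy.
  destruct (cyc_next_connects _ x y (cycle_nodup (owner x)) (owner_cycle x hx) hy) as [t ht].
  exists t. rewrite <- ht.
  enough (hs : forall s, Nat.iter s f x = Nat.iter s (cyc_next (cycle (owner x))) x /\
                         In (Nat.iter s f x) (cycle (owner x))) by apply hs.
  intro s. induction s as [|s [IH1 IH2]]; [split; [reflexivity | apply owner_cycle, hx] |].
  rewrite !Nat.iter_succ.
  destruct (cycle_owner x _ hx IH2) as [hD ho].
  rewrite hf, <- IH1 by exact hD. unfold rotate. rewrite ho.
  split; [reflexivity | apply cyc_next_in, IH2].
Qed.

End CyclePartition.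
End CyclicLists.

(** ** The Schreier graph of F_2 on the cosets of <b>

  A coset [w <b>] is represented by its reduced representative, a reduced
  word that is empty or ends with a letter [a] or [a^-1].  The generator
  [l] acts by reduced left multiplication [coset_act]. *)

Definition letter_a : letter := (true, false).
Definition letter_a' : letter := (true, true).
Definition letter_b : letter := (false, false).
Definition letter_b' : letter := (false, true).

Definition letter_dec (l1 l2 : letter) : {l1 = l2} + {l1 <> l2}.
Proof. decide equality; apply Bool.bool_dec. Defined.

Definition linv (l : letter) : letter := (fst l, negb (snd l)).

Lemma linv_linv l : linv (linv l) = l.
Proof. destruct l as [a b]. unfold linv. simpl. rewrite Bool.negb_involutive. reflexivity. Qed.

Lemma inverse_letters_iff l1 l2 : inverse_letters l1 l2 <-> l2 = linv l1.
Proof.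
  destruct l1 as [a1 b1], l2 as [a2 b2]. unfold inverse_letters, linv; simpl. split.
  - intros [-> h]. destruct b1, b2; simpl; congruence.
  - intro h. inversion h; subst. split; [reflexivity | destruct b1; simpl; congruence].
Qed.

Definition ends_in_a (u : word) : Prop :=
  match u with [] => True | _ => fst (last u letter_a') = true end.

Definition coset_word (u : word) : Prop := reduced u /\ ends_in_a u.

Definition coset_act (l : letter) (u : word) : word :=
  match u with
  | [] => if fst l then [l] else []
  | l' :: u' => if letter_dec l' (linv l) then u' else l :: u
  end.

Lemma reduced_cons l u : reduced u -> (forall l2 u2, u = l2 :: u2 -> l2 <> linv l) ->
  reduced (l :: u).
Proof.
  intros h1 h2. destruct u as [|l2 u2]; simpl; [exact I |]. split; [| exact h1].
  rewrite inverse_letters_iff. apply (h2 l2 u2 eq_refl).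
Qed.

Lemma coset_word_nil : coset_word [].
Proof. split; exact I. Qed.

Lemma coset_word_tail l u : coset_word (l :: u) -> coset_word u.
Proof.
  intros [h1 h2]. split; [destruct u; simpl in *; tauto |].
  destruct u; [exact I | exact h2].
Qed.

Lemma coset_act_word l u : coset_word u -> coset_word (coset_act l u).
Proof.
  intro h. destruct u as [|l' u']; simpl.
  - destruct (fst l) eqn:ef; [split; [exact I | exact ef] | exact coset_word_nil].
  - destruct (letter_dec l' (linv l)) as [_ | hne]; [eapply coset_word_tail; eauto |].
    destruct h as [h1 h2]. split; [| exact h2].
    apply reduced_cons; [exact h1 |]. intros l2 u2 ee. inversion ee; subst. exact hne.
Qed.

(** [linv l] undoes [l], except that [b] fixes the trivial coset. *)
Lemma coset_act_inv l u : coset_word u -> (u = [] -> fst l = true) ->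
  coset_act (linv l) (coset_act l u) = u.
Proof.
  intros h hb. destruct u as [|l' u'].
  - simpl. rewrite (hb eq_refl). simpl. rewrite linv_linv.
    destruct (letter_dec l l) as [_ | n]; [reflexivity | congruence].
  - simpl. destruct (letter_dec l' (linv l)) as [el | hne].
    + subst l'. destruct u' as [|l'' u''].
      * destruct h as [_ h2]. simpl in *. unfold linv in *. simpl in *. rewrite h2. reflexivity.
      * simpl. rewrite linv_linv. destruct (letter_dec l'' l) as [el | hne]; [| reflexivity].
        exfalso. subst l''. destruct h as [[h1 _] _]. apply h1.
        apply inverse_letters_iff. rewrite linv_linv. reflexivity.
    + simpl. rewrite linv_linv. destruct (letter_dec l l) as [_ | n]; [reflexivity | congruence].
Qed.

Lemma coset_act_b_nonnil l u : coset_word u -> u <> [] -> fst l = false ->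
  coset_act l u <> [].
Proof.
  intros h hn hf. destruct u as [|l' u']; [contradiction |]. simpl.
  destruct (letter_dec l' (linv l)) as [el | _]; [| discriminate].
  subst l'. destruct u' as [|l2 u2]; [| discriminate].
  destruct h as [_ h2]. simpl in h2. unfold linv in h2. simpl in h2. congruence.
Qed.

Lemma coset_act_cons l u : coset_word (l :: u) -> coset_act l u = l :: u.
Proof.
  intro h. destruct u as [|l2 u2]; simpl.
  - destruct h as [_ h2]. simpl in h2. rewrite h2. reflexivity.
  - destruct (letter_dec l2 (linv l)) as [el | _]; [| reflexivity]. exfalso.
    destruct h as [[h1 _] _]. apply h1. apply inverse_letters_iff. exact el.
Qed.

Lemma coset_act_linv_cons l u : coset_act (linv l) (l :: u) = u.
Proof.
  simpl. rewrite linv_linv. destruct (letter_dec l l) as [_ | n]; [reflexivity | congruence].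
Qed.

Lemma reduced_snoc w c d : reduced w -> (w = [] \/ ~ inverse_letters (last w d) c) ->
  reduced (w ++ [c]).
Proof.
  induction w as [|l w IH]; intros h hc; [exact I |].
  destruct w as [|l2 w2].
  - simpl. split; [| exact I]. destruct hc as [hc | hc]; [discriminate | exact hc].
  - simpl in h. destruct h as [h1 h2].
    change ((l :: l2 :: w2) ++ [c]) with (l :: ((l2 :: w2) ++ [c])).
    simpl. split; [exact h1 |]. apply IH; [exact h2 |].
    right. destruct hc as [hc | hc]; [discriminate | exact hc].
Qed.

Lemma ends_in_a_snoc w c : fst c = true -> ends_in_a (w ++ [c]).
Proof.
  intro hc. unfold ends_in_a. destruct (w ++ [c]) eqn:ez; [destruct w; discriminate |].
  rewrite <- ez, last_last. exact hc.
Qed.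

Lemma coset_completion w : reduced w ->
  exists c, fst c = true /\ coset_word (w ++ [c]).
Proof.
  intro hr. destruct (letter_dec (last w letter_a) letter_a) as [el | nl].
  - exists letter_a. split; [reflexivity |]. split; [| apply ends_in_a_snoc; reflexivity].
    apply reduced_snoc with (d := letter_a); [exact hr |]. right.
    rewrite el, inverse_letters_iff. discriminate.
  - exists letter_a'. split; [reflexivity |]. split; [| apply ends_in_a_snoc; reflexivity].
    apply reduced_snoc with (d := letter_a); [exact hr |]. right.
    rewrite inverse_letters_iff. intro ee. apply nl.
    rewrite <- (linv_linv (last w letter_a)), <- ee. reflexivity.
Qed.

Definition letter_code (l : letter) : nat :=
  match l with
  | (false, false) => 1 | (false, true) => 2 | (true, false) => 3 | (true, true) => 4
  end.

Fixpoint word_code (w : word) : nat :=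
  match w with [] => 0 | l :: w' => letter_code l + 5 * word_code w' end.

Lemma letter_code_range l : 1 <= letter_code l <= 4.
Proof. destruct l as [[|] [|]]; simpl; lia. Qed.

Lemma word_code_inj w1 w2 : word_code w1 = word_code w2 -> w1 = w2.
Proof.
  revert w2. induction w1 as [|l1 w1 IH]; intros [|l2 w2]; simpl; intro h;
    try pose proof (letter_code_range l1); try pose proof (letter_code_range l2);
    [reflexivity | lia | lia |].
  assert (letter_code l1 = letter_code l2 /\ word_code w1 = word_code w2) as [h1 h2] by lia.
  rewrite (IH _ h2). f_equal.
  destruct l1 as [[|] [|]], l2 as [[|] [|]]; simpl in h1; congruence.
Qed.

(** ** Means and null sets *)

Section Means.
Context {T : Type} {mu : (T -> Prop) -> R} (Hmean : is_mean mu).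

Definition null (A : T -> Prop) : Prop := mu A = 0%R.

Lemma mean_ext A B : (forall x, A x <-> B x) -> mu A = mu B.
Proof. apply (proj1 Hmean). Qed.
Lemma mean_range A : (0 <= mu A <= 1)%R.
Proof. apply (proj1 (proj2 Hmean)). Qed.
Lemma mean_add A B : set_disjoint A B -> mu (set_union A B) = (mu A + mu B)%R.
Proof. apply (proj2 (proj2 (proj2 Hmean))). Qed.

Lemma mean_split A (P : T -> Prop) :
  mu A = (mu (fun x => A x /\ P x) + mu (fun x => A x /\ ~ P x))%R.
Proof.
  rewrite <- mean_add by (intros x [[_ h1] [_ h2]]; contradiction).
  apply mean_ext. intro x. unfold set_union.
  split; [intro ha; destruct (classic (P x)); tauto | intros [[] | []]; assumption].
Qed.

Lemma null_empty A : (forall x, ~ A x) -> null A.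
Proof.
  intro h. unfold null. pose proof (mean_split A A) as hs.
  rewrite (mean_ext (fun x => A x /\ A x) A) in hs by tauto.
  rewrite (mean_ext (fun x => A x /\ ~ A x) A) in hs
    by (intro x; split; [tauto | intro ha; destruct (h x ha)]).
  lra.
Qed.

Lemma mean_mono A B : (forall x, A x -> B x) -> (mu A <= mu B)%R.
Proof.
  intro h. rewrite (mean_split B A).
  rewrite (mean_ext (fun x => B x /\ A x) A) by (intro x; split; [tauto | auto]).
  pose proof (mean_range (fun x => B x /\ ~ A x)). lra.
Qed.

Lemma mean_union_le A B : (mu (set_union A B) <= mu A + mu B)%R.
Proof.
  rewrite (mean_split (set_union A B) A).
  rewrite (mean_ext (fun x => set_union A B x /\ A x) A) by (unfold set_union; tauto).
  assert (hB : (mu (fun x => set_union A B x /\ ~ A x) <= mu B)%R).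
  { apply mean_mono. intros x [[ha | hb] hna]; [contradiction | exact hb]. }
  lra.
Qed.

Lemma null_sub A B : (forall x, A x -> B x) -> null B -> null A.
Proof.
  intros h hb. unfold null in *. pose proof (mean_mono A B h). pose proof (mean_range A). lra.
Qed.

Lemma null_union A B : null A -> null B -> null (set_union A B).
Proof.
  intros ha hb. unfold null in *.
  pose proof (mean_union_le A B). pose proof (mean_range (set_union A B)). lra.
Qed.

Lemma mean_remove_null A N : null N -> mu A = mu (fun x => A x /\ ~ N x).
Proof.
  intro hN. rewrite (mean_split A N).
  pose proof (null_sub (fun x => A x /\ N x) N (fun x h => proj2 h) hN) as h0.
  unfold null in h0. lra.
Qed.

Lemma F2_invariant_of_letters (pa pai pb pbi : T -> T) :
  (forall l A, mu (image (act_letter pa pai pb pbi l) A) = mu A) ->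
  F2_invariant pa pai pb pbi mu.
Proof.
  intros hl w. induction w as [|l w IH]; intro A.
  - apply mean_ext. intro x. unfold image. simpl.
    split; [intros [y [hy ->]]; exact hy | intro hx; exists x; auto].
  - rewrite <- (IH A), <- (hl l (image (act_word pa pai pb pbi w) A)).
    apply mean_ext. intro y. unfold image. simpl. split.
    + intros [x [hx ->]]. exists (act_word pa pai pb pbi w x).
      split; [exists x; auto | reflexivity].
    + intros [z [[x [hx ->]] ->]]. exists x. auto.
Qed.

End Means.

Arguments null {T} mu A.

(** ** Groups, invariant means and the wobbling lemma *)

Section Group.
Context {H : Type} (mul : H -> H -> H) (one : H) (inv : H -> H).
Hypothesis HG : is_group mul one inv.

Lemma mul_assoc x y z : mul (mul x y) z = mul x (mul y z). Proof. apply HG. Qed.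
Lemma mul_one_l x : mul one x = x. Proof. apply HG. Qed.
Lemma mul_one_r x : mul x one = x. Proof. apply HG. Qed.
Lemma mul_inv_l x : mul (inv x) x = one. Proof. apply HG. Qed.
Lemma mul_inv_r x : mul x (inv x) = one. Proof. apply HG. Qed.

Lemma mul_cancel_l g x y : mul g x = mul g y -> x = y.
Proof.
  intro e. rewrite <- (mul_one_l x), <- (mul_one_l y), <- (mul_inv_l g), !mul_assoc, e.
  reflexivity.
Qed.

Lemma mul_cancel_r g x y : mul x g = mul y g -> x = y.
Proof.
  intro h. rewrite <- (mul_one_r x), <- (mul_one_r y), <- (mul_inv_r g), <- !mul_assoc, h.
  reflexivity.
Qed.

Lemma inv_inv x : inv (inv x) = x.
Proof. apply (mul_cancel_l (inv x)). rewrite mul_inv_r, mul_inv_l. reflexivity. Qed.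

Lemma inv_mul x y : inv (mul x y) = mul (inv y) (inv x).
Proof.
  apply (mul_cancel_l (mul x y)).
  rewrite mul_inv_r, mul_assoc, <- (mul_assoc y), mul_inv_r, mul_one_l, mul_inv_r.
  reflexivity.
Qed.

Lemma mul_inv_cancel g x : mul (inv g) (mul g x) = x.
Proof. rewrite <- mul_assoc, mul_inv_l, mul_one_l. reflexivity. Qed.

Section InvariantMeans.
Context {mu : (H -> Prop) -> R} (Hmu : H_invariant_mean mul mu).
Let Hmean : is_mean mu := proj1 Hmu.

Lemma mean_translate g A : mu (image (mul g) A) = mu A.
Proof. apply (proj2 Hmu). Qed.

Definition disjoint_translates (A : H -> Prop) (gs : list H) : Prop :=
  NoDup gs /\ forall g g', In g gs -> In g' gs -> g <> g' ->
    set_disjoint (image (mul g) A) (image (mul g') A).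

Lemma mean_disjoint_translates A gs : disjoint_translates A gs ->
  mu (fun x => exists g, In g gs /\ image (mul g) A x) = (INR (length gs) * mu A)%R.
Proof.
  intros [hn hd]. revert hd. induction hn as [|g gs hg hn IH]; intro hd.
  - simpl. rewrite Rmult_0_l. apply null_empty; [exact Hmean |]. intros x [g [[] _]].
  - set (U := fun x => exists g', In g' gs /\ image (mul g') A x).
    assert (hU : mu U = (INR (length gs) * mu A)%R).
    { apply IH. intros a b ha hb. apply hd; right; assumption. }
    assert (hdisj : set_disjoint (image (mul g) A) U).
    { intros x [ha [g' [hg' hb]]].
      refine (hd g g' (or_introl eq_refl) (or_intror hg') _ x (conj ha hb)).
      intro e. subst. contradiction. }
    rewrite (mean_ext Hmean _ (set_union (image (mul g) A) U)).
    + rewrite (mean_add Hmean _ _ hdisj), hU, mean_translate.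
      simpl length. rewrite S_INR. lra.
    + intro x. unfold set_union, U. split.
      * intros [g' [[<- | hg'] hx]]; [left; exact hx | right; exists g'; auto].
      * intros [hx | [g' [hg' hx]]]; [exists g | exists g']; simpl; auto.
Qed.

Lemma null_of_disjoint_translates A :
  (forall k, exists gs, length gs = S k /\ disjoint_translates A gs) -> null mu A.
Proof.
  intro h. apply Rle_multiples_zero; [apply (mean_range Hmean) |]. intro k.
  destruct (h k) as [gs [hl hp]].
  rewrite <- hl, <- mean_disjoint_translates by exact hp. apply (mean_range Hmean).
Qed.

Lemma null_singleton (Hinf : infinite_type H) h : null mu (fun x => x = h).
Proof.
  apply null_of_disjoint_translates. intro k.
  destruct (infinite_nodup_list H (S k) Hinf) as [gs [hl hn]].
  exists gs. split; [exact hl |]. split; [exact hn |].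
  intros g g' _ _ hne x [[y [hy ey]] [y' [hy' ey']]].
  rewrite hy in ey. rewrite hy' in ey'. apply hne, (mul_cancel_r h). congruence.
Qed.

Lemma null_finite (Hinf : infinite_type H) (l : list H) : null mu (fun x => In x l).
Proof.
  induction l as [|h l IH]; [apply null_empty; [exact Hmean | intros x []] |].
  apply (null_sub Hmean _ (set_union (fun x => x = h) (fun x => In x l))).
  - intros x [<- | hx]; [left | right]; auto.
  - apply null_union; [exact Hmean | apply null_singleton, Hinf | exact IH].
Qed.

Lemma null_sequence (Hinf : infinite_type H) (e : nat -> H) :
  (forall k, exists M gs, length gs = S k /\
     disjoint_translates (fun x => exists i, M <= i /\ x = e i) gs) ->
  null mu (fun x => exists i, x = e i).
Proof.
  intro hk. apply Rle_multiples_zero; [apply (mean_range Hmean) |]. intro k.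
  destruct (hk k) as [M [gs [hl hd]]].
  set (tail := fun x => exists i, M <= i /\ x = e i).
  set (prefix := fun x => In x (map e (seq 0 M))).
  assert (hle : (mu (fun x => exists i, x = e i) <= mu tail)%R).
  { eapply Rle_trans; [apply (mean_mono Hmean _ (set_union prefix tail)) |].
    - intros x [i ->]. unfold set_union, prefix, tail.
      destruct (le_lt_dec M i); [right; exists i; auto | left].
      apply in_map, in_seq. lia.
    - pose proof (mean_union_le Hmean prefix tail). pose proof (null_finite Hinf (map e (seq 0 M))).
      unfold null, prefix in *. lra. }
  pose proof (mean_disjoint_translates tail gs hd) as hU. rewrite hl in hU.
  pose proof (mean_range Hmean (fun x => exists g, In g gs /\ image (mul g) tail x)).
  pose proof (pos_INR (S k)) as hk0.
  apply Rmult_le_compat_l with (r := INR (S k)) in hle; [| lra]. lra.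
Qed.

Lemma mean_bounded_displacement (f : H -> H) (G : list H) :
  (forall x y, f x = f y -> x = y) -> forall B,
  (forall x, B x -> exists g, In g G /\ f x = mul g x) -> mu (image f B) = mu B.
Proof.
  intro finj. induction G as [|g G IH]; intros B hB.
  - rewrite !null_empty; [reflexivity | exact Hmean | | exact Hmean |].
    + intros x hx. destruct (hB x hx) as [g [[] _]].
    + intros y [x [hx _]]. destruct (hB x hx) as [g [[] _]].
  - set (B1 := fun x => B x /\ f x = mul g x). set (B2 := fun x => B x /\ f x <> mul g x).
    rewrite (mean_split Hmean B (fun x => f x = mul g x)).
    rewrite (mean_split Hmean (image f B) (image f B1)).
    rewrite (mean_ext Hmean (fun y => image f B y /\ image f B1 y) (image (mul g) B1)).
    + rewrite (mean_ext Hmean (fun y => image f B y /\ ~ image f B1 y) (image f B2)).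
      * fold B1 B2. rewrite mean_translate, IH; [reflexivity |].
        intros x [hx hne]. destruct (hB x hx) as [g' [[<- | hg'] eg']]; [contradiction |].
        exists g'. auto.
      * intro y. unfold image, B1, B2. split.
        -- intros [[x [hx ->]] hn]. exists x. split; [split; [exact hx |] | reflexivity].
           intro ee. apply hn. exists x. auto.
        -- intros [x [[hx hne] ->]]. split; [exists x; auto |].
           intros [x' [[_ ee] ex']]. apply finj in ex'. subst. contradiction.
    + intro y. unfold image, B1. split.
      * intros [_ [x [[hx ee] ->]]]. exists x. rewrite ee. auto.
      * intros [x [[hx ee] ->]]. rewrite <- ee. split; exists x; auto.
Qed.

Lemma wobbling_invariance (f : H -> H) (G : list H) (W : H -> Prop) :
  (forall x y, f x = f y -> x = y) -> null mu W -> null mu (image f W) ->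
  (forall x, ~ W x -> exists g, In g G /\ f x = mul g x) ->
  forall A, mu (image f A) = mu A.
Proof.
  intros finj hW hfW hb A.
  rewrite (mean_remove_null Hmean A W hW), (mean_remove_null Hmean (image f A) _ hfW).
  rewrite <- (mean_bounded_displacement f G finj (fun x => A x /\ ~ W x))
    by (intros x [_ hx]; apply hb, hx).
  apply mean_ext; [exact Hmean |]. intro y. unfold image. split.
  - intros [[x [hx ->]] hn]. exists x. split; [split; [exact hx |] | reflexivity].
    intro hw. apply hn. exists x. auto.
  - intros [x [[hx hnw] ->]]. split; [exists x; auto |].
    intros [x' [hw ex']]. apply finj in ex'. subst. contradiction.
Qed.

End InvariantMeans.

(** ** Word length with respect to a finite generating list *)

Section WordLength.
Variable Sg : list H.
Hypothesis HS : forall x, generated mul one inv (fun s => In s Sg) x.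

Definition gens : list H := Sg ++ map inv Sg.

Lemma gens_inv s : In s gens -> In (inv s) gens.
Proof.
  unfold gens. intro h. apply in_app_or in h. apply in_or_app. destruct h as [h | h].
  - right. apply in_map. exact h.
  - left. apply in_map_iff in h. destruct h as [t [<- ht]]. rewrite inv_inv. exact ht.
Qed.

Definition word_prod (l : list H) : H := fold_right mul one l.
Definition over_gens (l : list H) : Prop := forall s, In s l -> In s gens.

Lemma word_prod_app l1 l2 : word_prod (l1 ++ l2) = mul (word_prod l1) (word_prod l2).
Proof.
  induction l1 as [|s l IH]; simpl; [rewrite mul_one_l | rewrite IH, mul_assoc]; reflexivity.
Qed.

Definition word_inv (l : list H) : list H := rev (map inv l).

Lemma word_prod_inv l : word_prod (word_inv l) = inv (word_prod l).
Proof.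
  unfold word_inv. induction l as [|s l IH]; simpl.
  - apply (mul_cancel_l one). rewrite mul_inv_r, mul_one_l. reflexivity.
  - rewrite word_prod_app, IH. simpl. rewrite mul_one_r, inv_mul. reflexivity.
Qed.

Lemma over_gens_app l1 l2 : over_gens l1 -> over_gens l2 -> over_gens (l1 ++ l2).
Proof. intros h1 h2 s hs. apply in_app_or in hs. destruct hs; auto. Qed.

Lemma over_gens_inv l : over_gens l -> over_gens (word_inv l).
Proof.
  intros h s hs. apply in_rev, in_map_iff in hs. destruct hs as [t [<- ht]].
  apply gens_inv, h, ht.
Qed.

Lemma spelled x : exists l, over_gens l /\ x = word_prod l.
Proof.
  induction (HS x) as [x hx | | x y _ [l1 [h1 e1]] _ [l2 [h2 e2]] | x _ [l [h e]]].
  - exists [x]. split.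
    + intros s [<- | []]. apply in_or_app. left. exact hx.
    + simpl. rewrite mul_one_r. reflexivity.
  - exists []. split; [intros s [] | reflexivity].
  - exists (l1 ++ l2). split; [apply over_gens_app; assumption |].
    rewrite word_prod_app, e1, e2. reflexivity.
  - exists (word_inv l). split; [apply over_gens_inv, h |]. rewrite word_prod_inv, e. reflexivity.
Qed.

Definition spelled_with (x : H) (n : nat) : Prop :=
  exists l, over_gens l /\ length l = n /\ x = word_prod l.

Definition wlen (x : H) : nat :=
  epsilon (inhabits 0) (fun n => spelled_with x n /\ forall m, spelled_with x m -> n <= m).

Lemma wlen_minimal x :
  spelled_with x (wlen x) /\ forall m, spelled_with x m -> wlen x <= m.
Proof.
  assert (hex : exists n, spelled_with x n).
  { destruct (spelled x) as [l [h e]]. exists (length l), l. auto. }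
  exact (epsilon_spec (inhabits 0) _ (least_witness _ hex)).
Qed.

Lemma wlen_spec x : spelled_with x (wlen x).
Proof. apply wlen_minimal. Qed.

Lemma wlen_le x l : over_gens l -> x = word_prod l -> wlen x <= length l.
Proof. intros h e. apply wlen_minimal. exists l. auto. Qed.

Lemma wlen_mul x y : wlen (mul x y) <= wlen x + wlen y.
Proof.
  destruct (wlen_spec x) as [l1 [h1 [n1 e1]]], (wlen_spec y) as [l2 [h2 [n2 e2]]].
  rewrite <- n1, <- n2, <- length_app. apply wlen_le; [apply over_gens_app; auto |].
  rewrite word_prod_app, <- e1, <- e2. reflexivity.
Qed.

Lemma wlen_inv_le x : wlen (inv x) <= wlen x.
Proof.
  destruct (wlen_spec x) as [l [h [n e]]]. rewrite <- n.
  replace (length l) with (length (word_inv l))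
    by (unfold word_inv; rewrite length_rev, length_map; reflexivity).
  apply wlen_le; [apply over_gens_inv, h |].
  rewrite word_prod_inv, e. reflexivity.
Qed.

Lemma wlen_inv x : wlen (inv x) = wlen x.
Proof. pose proof (wlen_inv_le x). pose proof (wlen_inv_le (inv x)). rewrite inv_inv in *. lia. Qed.

Lemma wlen_one : wlen one = 0.
Proof. assert (wlen one <= 0) by (apply (wlen_le one []); [intros s [] | reflexivity]). lia. Qed.

Lemma wlen_zero x : wlen x = 0 -> x = one.
Proof.
  intro h. destruct (wlen_spec x) as [l [_ [n e]]]. rewrite h in n.
  destruct l; [exact e | discriminate].
Qed.

Lemma wlen_gen s : In s gens -> wlen s <= 1.
Proof.
  intro h. apply (wlen_le s [s]); [intros t [<- | []]; exact h |].
  simpl. rewrite mul_one_r. reflexivity.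
Qed.

Lemma geodesic_step x : 0 < wlen x ->
  exists y s, In s gens /\ y = mul s x /\ wlen y = pred (wlen x).
Proof.
  intro hp. destruct (wlen_spec x) as [l [h [n e]]].
  destruct l as [|s l]; [simpl in n; lia |].
  assert (hs : In s gens) by (apply h; left; reflexivity).
  assert (hl : over_gens l) by (intros t ht; apply h; right; exact ht).
  exists (word_prod l), (inv s). split; [apply gens_inv, hs |]. split.
  - rewrite e. simpl. rewrite mul_inv_cancel. reflexivity.
  - pose proof (wlen_le (word_prod l) l hl eq_refl).
    pose proof (wlen_mul s (word_prod l)). pose proof (wlen_gen s hs).
    simpl in n, e. rewrite <- e in *. lia.
Qed.

Definition parent (x : H) : H :=
  epsilon (inhabits x) (fun y => exists s, In s gens /\ y = mul s x /\ wlen y = pred (wlen x)).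

Lemma parent_spec x : 0 < wlen x ->
  exists s, In s gens /\ parent x = mul s x /\ wlen (parent x) = pred (wlen x).
Proof. intro h. exact (epsilon_spec (inhabits x) _ (geodesic_step x h)). Qed.

Fixpoint words_upto (r : nat) : list (list H) :=
  match r with
  | 0 => [[]]
  | S r' => [] :: flat_map (fun s => map (cons s) (words_upto r')) gens
  end.

Lemma words_upto_in r l : over_gens l -> length l <= r -> In l (words_upto r).
Proof.
  revert l. induction r as [|r IH]; intros l h hl.
  - destruct l; [left; reflexivity | simpl in hl; lia].
  - destruct l as [|s l]; [left; reflexivity |]. right. apply in_flat_map.
    exists s. split; [apply h; left; reflexivity |].
    apply in_map, IH; [intros t ht; apply h; right; exact ht | simpl in hl; lia].
Qed.

Definition ball (r : nat) : list H := map word_prod (words_upto r).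

Lemma ball_in r x : wlen x <= r -> In x (ball r).
Proof.
  intro h. destruct (wlen_spec x) as [l [hw [hn e]]]. unfold ball. rewrite e.
  apply in_map, words_upto_in; [exact hw | lia].
Qed.

Lemma wlen_surjective (Hinf : infinite_type H) n : exists x, wlen x = n.
Proof.
  assert (exists x, n <= wlen x) as [x hx].
  { apply NNPP. intro h. apply Hinf. exists (ball n). intro x. apply ball_in.
    destruct (le_lt_dec n (wlen x)) as [l | l]; [exfalso; apply h; exists x; exact l | lia]. }
  exists (Nat.iter (wlen x - n) parent x).
  assert (forall k, k <= wlen x -> wlen (Nat.iter k parent x) = wlen x - k) as hk.
  { induction k as [|k IH]; intro h; simpl; [lia |].
    destruct (parent_spec (Nat.iter k parent x)) as [s [_ [_ hp]]]; [rewrite IH; lia |].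
    rewrite hp, IH; lia. }
  rewrite hk; lia.
Qed.



(** ** The construction *)

Section Construction.
Hypothesis Hinf : infinite_type H.

(** Sparse lengths: consecutive values are far apart, and a value minus 2 is
    never again a value. *)
Definition sparse (i : nat) : nat := (i + 2) * (i + 2).

Lemma sparse_ge i : 4 <= sparse i.
Proof. unfold sparse. nia. Qed.
Lemma sparse_inj i j : sparse i = sparse j -> i = j.
Proof. unfold sparse. intro h. nia. Qed.
Lemma sparse_gap i j : i < j -> sparse i + 2 * i + 5 <= sparse j.
Proof. unfold sparse. intro h. nia. Qed.
Lemma sparse_not_minus2 i j : sparse j <> sparse i - 2.
Proof. unfold sparse. intro h. destruct (le_lt_dec i j); nia. Qed.

Definition anchor (i : nat) : H := epsilon (inhabits one) (fun x => wlen x = sparse i).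

Lemma wlen_anchor i : wlen (anchor i) = sparse i.
Proof. exact (epsilon_spec (inhabits one) _ (wlen_surjective Hinf (sparse i))). Qed.

Lemma anchor_inj i j : anchor i = anchor j -> i = j.
Proof. intro h. apply sparse_inj. rewrite <- !wlen_anchor, h. reflexivity. Qed.

Lemma anchor_tails_disjoint gs : NoDup gs ->
  disjoint_translates (fun x => exists i, S (list_max (map wlen gs)) <= i /\ x = anchor i) gs.
Proof.
  intro hn. split; [exact hn |]. set (m := list_max (map wlen gs)).
  assert (hm : forall g, In g gs -> wlen g <= m).
  { intros g hg. assert (hle : m <= m) by reflexivity. apply list_max_le in hle.
    rewrite Forall_forall in hle. apply hle, in_map, hg. }
  intros g g' hg hg' hne x [[y [[i [hi ->]] ->]] [y' [[j [hj ->]] ej]]].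
  pose proof (hm g hg). pose proof (hm g' hg').
  destruct (Nat.eq_dec i j) as [-> | hij]; [apply hne, (mul_cancel_r (anchor j)), ej |].
  assert (dist : forall a b (ha : In a gs) (hb : In b gs) p q,
             mul a (anchor p) = mul b (anchor q) -> sparse q <= sparse p + 2 * m).
  { intros a b ha hb p q epq. rewrite <- !wlen_anchor.
    replace (anchor q) with (mul (inv b) (mul a (anchor p)))
      by (rewrite epq, mul_inv_cancel; reflexivity).
    pose proof (wlen_mul (inv b) (mul a (anchor p))). pose proof (wlen_mul a (anchor p)).
    rewrite wlen_inv in *. pose proof (hm a ha). pose proof (hm b hb). lia. }
  pose proof (dist g g' hg hg' i j ej). pose proof (dist g' g hg' hg j i (eq_sym ej)).
  destruct (le_lt_dec i j) as [l | l].
  - pose proof (sparse_gap i j ltac:(lia)). lia.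
  - pose proof (sparse_gap j i l). lia.
Qed.

Definition coset_pt (u : word) : H := anchor (word_code u).

Lemma coset_pt_inj u v : coset_pt u = coset_pt v -> u = v.
Proof. intro h. apply word_code_inj, anchor_inj, h. Qed.

Definition OnCosets (x : H) : Prop := exists u, coset_word u /\ x = coset_pt u.

Definition coset_of (x : H) : word :=
  epsilon (inhabits []) (fun u => coset_word u /\ x = coset_pt u).

Lemma coset_of_spec x : OnCosets x -> coset_word (coset_of x) /\ x = coset_pt (coset_of x).
Proof. intro h. exact (epsilon_spec (inhabits []) _ h). Qed.

Lemma coset_of_pt u : coset_word u -> coset_of (coset_pt u) = u.
Proof.
  intro h. symmetry. apply coset_pt_inj.
  apply (coset_of_spec (coset_pt u)). exists u. auto.
Qed.

Lemma OnCosets_pt u : coset_word u -> OnCosets (coset_pt u).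
Proof. intro h. exists u. auto. Qed.

Lemma OnCosets_wlen x : OnCosets x -> exists i, wlen x = sparse i.
Proof. intros [u [_ ->]]. exists (word_code u). apply wlen_anchor. Qed.

Lemma one_not_OnCosets : ~ OnCosets one.
Proof.
  intro h. destruct (OnCosets_wlen one h) as [i hi]. rewrite wlen_one in hi.
  pose proof (sparse_ge i). lia.
Qed.

Definition tree_parent (x : H) : H :=
  if pdec (OnCosets (parent x)) then parent (parent (parent x)) else parent x.

Lemma even_add_odd n k : Nat.even (n + (2 * k + 1)) = negb (Nat.even n).
Proof.
  replace (n + (2 * k + 1)) with (S (n + 2 * k)) by lia.
  rewrite Nat.even_succ, Nat.odd_add_mul_2, Nat.negb_even. reflexivity.
Qed.

Lemma tree_parent_step x : ~ OnCosets x -> 0 < wlen x ->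
  ~ OnCosets (tree_parent x) /\ wlen (tree_parent x) < wlen x /\
  Nat.even (wlen (tree_parent x)) = negb (Nat.even (wlen x)) /\
  exists g, wlen g <= 3 /\ tree_parent x = mul g x.
Proof.
  intros hx hl. unfold tree_parent.
  destruct (parent_spec x hl) as [s1 [hs1 [e1 l1]]].
  destruct (pdec (OnCosets (parent x))) as [hp | hp].
  - destruct (OnCosets_wlen _ hp) as [i hi]. pose proof (sparse_ge i).
    destruct (parent_spec (parent x)) as [s2 [hs2 [e2 l2]]]; [lia |].
    destruct (parent_spec (parent (parent x))) as [s3 [hs3 [e3 l3]]]; [lia |].
    split; [| split; [lia | split]].
    + intro h. destruct (OnCosets_wlen _ h) as [j hj]. apply (sparse_not_minus2 i j). lia.
    + replace (wlen x) with (wlen (parent (parent (parent x))) + (2 * 1 + 1)) by lia.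
      rewrite even_add_odd, Bool.negb_involutive. reflexivity.
    + exists (word_prod [s3; s2; s1]). split.
      * apply (wlen_le _ [s3; s2; s1]); [| reflexivity].
        intros t [<- | [<- | [<- | []]]]; assumption.
      * rewrite e3, e2, e1. simpl. rewrite mul_one_r, !mul_assoc. reflexivity.
  - split; [exact hp | split; [lia | split]].
    + replace (wlen x) with (wlen (parent x) + (2 * 0 + 1)) by lia.
      rewrite even_add_odd, Bool.negb_involutive. reflexivity.
    + exists s1. split; [pose proof (wlen_gen s1 hs1); lia | exact e1].
Qed.

(** The children of [v] (they all lie in the ball of radius 3 around [v]). *)
Definition children (v : H) : list H :=
  nodup (fun x y => pdec (x = y))
    (filter (fun x => if pdec (tree_parent x = v /\ ~ OnCosets x /\ 0 < wlen x)
                      then true else false)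
            (map (fun g => mul g v) (ball 3))).

Lemma children_spec v x : In x (children v) <-> tree_parent x = v /\ ~ OnCosets x /\ 0 < wlen x.
Proof.
  unfold children. rewrite nodup_In, filter_In.
  destruct (pdec (tree_parent x = v /\ ~ OnCosets x /\ 0 < wlen x)) as [h | h];
    [| split; [intros [_ f]; discriminate | contradiction]].
  split; [intros _; exact h | intros _; split; [| reflexivity]].
  destruct h as [e0 [hE hl]]. destruct (tree_parent_step x hE hl) as [_ [_ [_ [g [hg eg]]]]].
  apply in_map_iff. exists (inv g). split; [rewrite <- e0, eg, mul_inv_cancel; reflexivity |].
  apply ball_in. rewrite wlen_inv. exact hg.
Qed.

(** A vertex together with its children; these families will be the cycles of
    [a] (vertices of even length) and of [b] (vertices of odd length). *)
Definition family (v : H) : list H := v :: children v.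

Lemma family_nodup v : NoDup (family v).
Proof.
  constructor; [| apply NoDup_nodup]. intro h. apply children_spec in h.
  destruct h as [e0 [hE hl]]. destruct (tree_parent_step v hE hl) as [_ [hlt _]].
  rewrite e0 in hlt. lia.
Qed.

Lemma family_member v y : ~ OnCosets v -> In y (family v) ->
  ~ OnCosets y /\
  (y = v \/ tree_parent y = v /\ 0 < wlen y /\ Nat.even (wlen y) = negb (Nat.even (wlen v))).
Proof.
  intros hv [<- | h]; [auto |]. apply children_spec in h. destruct h as [e0 [hy hl]].
  split; [exact hy |]. right. split; [exact e0 | split; [exact hl |]].
  destruct (tree_parent_step y hy hl) as [_ [_ [hp _]]]. rewrite e0 in hp.
  rewrite hp, Bool.negb_involutive. reflexivity.
Qed.

Lemma family_step v x y : In x (family v) -> In y (family v) ->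
  exists g, In g (ball 6) /\ y = mul g x.
Proof.
  assert (off : forall z, In z (family v) -> exists o, wlen o <= 3 /\ z = mul o v).
  { intros z [<- | hz].
    - exists one. rewrite wlen_one, mul_one_l. auto with arith.
    - apply children_spec in hz. destruct hz as [e0 [hz hl]].
      destruct (tree_parent_step z hz hl) as [_ [_ [_ [g [hg eg]]]]].
      exists (inv g). rewrite wlen_inv, <- e0, eg, mul_inv_cancel. auto. }
  intros hx hy. destruct (off x hx) as [o1 [h1 ->]], (off y hy) as [o2 [h2 ->]].
  exists (mul o2 (inv o1)). split; [| rewrite mul_assoc, mul_inv_cancel; reflexivity].
  apply ball_in. pose proof (wlen_mul o2 (inv o1)). rewrite wlen_inv in *. lia.
Qed.

(** Owners: [a] rotates the family of the even-length member among [x] and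
    its tree parent, [b] that of the odd-length one. *)
Definition a_owner (x : H) : H := if Nat.even (wlen x) then x else tree_parent x.
Definition b_owner (x : H) : H := if Nat.even (wlen x) then tree_parent x else x.

Definition a_domain (x : H) : Prop := ~ OnCosets x.
Definition b_domain (x : H) : Prop := ~ OnCosets x /\ x <> one.

Lemma a_owner_family x : a_domain x ->
  ~ OnCosets (a_owner x) /\ Nat.even (wlen (a_owner x)) = true /\ In x (family (a_owner x)).
Proof.
  intro hx. unfold a_owner. destruct (Nat.even (wlen x)) eqn:ev;
    [split; [exact hx | split; [exact ev | left; reflexivity]] |].
  assert (hl : 0 < wlen x) by (destruct (wlen x); [discriminate | lia]).
  destruct (tree_parent_step x hx hl) as [h1 [_ [h3 _]]]. rewrite ev in h3.
  split; [exact h1 | split; [exact h3 | right; apply children_spec; auto]].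
Qed.

Lemma b_owner_family x : b_domain x ->
  ~ OnCosets (b_owner x) /\ Nat.even (wlen (b_owner x)) = false /\ In x (family (b_owner x)).
Proof.
  intros [hx hn]. assert (hl : 0 < wlen x).
  { destruct (wlen x) eqn:ee; [exfalso; apply hn, wlen_zero, ee | lia]. }
  unfold b_owner. destruct (Nat.even (wlen x)) eqn:ev;
    [| split; [exact hx | split; [exact ev | left; reflexivity]]].
  destruct (tree_parent_step x hx hl) as [h1 [_ [h3 _]]]. rewrite ev in h3.
  split; [exact h1 | split; [exact h3 | right; apply children_spec; auto]].
Qed.

Lemma a_in_family x : a_domain x -> In x (family (a_owner x)).
Proof. intro h. apply (a_owner_family x h). Qed.

Lemma b_in_family x : b_domain x -> In x (family (b_owner x)).
Proof. intro h. apply (b_owner_family x h). Qed.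

Lemma a_family_owner x y : a_domain x -> In y (family (a_owner x)) ->
  a_domain y /\ a_owner y = a_owner x.
Proof.
  intros hx hy. destruct (a_owner_family x hx) as [hv [hev _]].
  destruct (family_member _ y hv hy) as [hyE [-> | [hp [_ hpar]]]]; split; try exact hyE.
  - unfold a_owner at 1. rewrite hev. reflexivity.
  - rewrite hev in hpar. unfold a_owner at 1. rewrite hpar. exact hp.
Qed.

Lemma b_family_owner x y : b_domain x -> In y (family (b_owner x)) ->
  b_domain y /\ b_owner y = b_owner x.
Proof.
  intros hx hy. destruct (b_owner_family x hx) as [hv [hev _]].
  destruct (family_member _ y hv hy) as [hyE [-> | [hp [hl hpar]]]].
  - split; [split; [exact hyE | intro e1; rewrite e1, wlen_one in hev; discriminate] |].
    unfold b_owner at 1. rewrite hev. reflexivity.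
  - rewrite hev in hpar. split.
    + split; [exact hyE | intro e1; rewrite e1, wlen_one in hl; lia].
    + unfold b_owner at 1. rewrite hpar. exact hp.
Qed.

Definition coset_step (l : letter) (x : H) : H :=
  match coset_of x, fst l with
  | [], false => one
  | u, _ => coset_pt (coset_act l u)
  end.

Definition tree_step (l : letter) (x : H) : H :=
  match l with
  | (true, back) => spin a_owner family back x
  | (false, back) => if pdec (x = one) then coset_pt [] else spin b_owner family back x
  end.

Definition step (l : letter) (x : H) : H :=
  if pdec (OnCosets x) then coset_step l x else tree_step l x.

Lemma step_coset l u : coset_word u -> (u = [] -> fst l = true) ->
  step l (coset_pt u) = coset_pt (coset_act l u).
Proof.
  intros h hb. unfold step. destruct (pdec (OnCosets (coset_pt u))) as [_ | n];
    [| exfalso; apply n, OnCosets_pt, h].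
  unfold coset_step. rewrite coset_of_pt by exact h.
  destruct u; [rewrite hb by reflexivity |]; reflexivity.
Qed.

Lemma step_base_b l : fst l = false -> step l (coset_pt []) = one.
Proof.
  intro hl. unfold step. destruct (pdec (OnCosets (coset_pt []))) as [_ | n];
    [| exfalso; apply n, OnCosets_pt, coset_word_nil].
  unfold coset_step. rewrite coset_of_pt, hl by exact coset_word_nil. reflexivity.
Qed.

Lemma step_one_b l : fst l = false -> step l one = coset_pt [].
Proof.
  intro hl. unfold step.
  destruct (pdec (OnCosets one)) as [h | _]; [destruct (one_not_OnCosets h) |].
  destruct l as [[|] back]; [discriminate |]. simpl.
  destruct (pdec (one = one)) as [_ | n]; [reflexivity | congruence].
Qed.

Lemma step_a back x : a_domain x -> step (true, back) x = spin a_owner family back x.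
Proof. intro h. unfold step. destruct (pdec (OnCosets x)); [contradiction | reflexivity]. Qed.

Lemma step_b back x : b_domain x -> step (false, back) x = spin b_owner family back x.
Proof.
  intros [h hn]. unfold step. destruct (pdec (OnCosets x)); [contradiction |]. simpl.
  destruct (pdec (x = one)); [contradiction | reflexivity].
Qed.

Lemma step_inv l x : step (linv l) (step l x) = x.
Proof.
  destruct l as [g back]. unfold linv. simpl fst. simpl snd.
  destruct (classic (OnCosets x)) as [hx | hx].
  - destruct (coset_of_spec x hx) as [hu ex]. rewrite ex.
    set (u := coset_of x) in *. clearbody u.
    destruct (classic (u = [] /\ g = false)) as [[-> ->] | hne].
    + rewrite step_base_b, step_one_b by reflexivity. reflexivity.
    + assert (hb : u = [] -> g = true) by (destruct g; tauto).
      assert (hb' : coset_act (g, back) u = [] -> g = true).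
      { intro hnil. destruct g; [reflexivity | exfalso].
        refine (coset_act_b_nonnil (false, back) u hu _ eq_refl hnil). intros ->. tauto. }
      rewrite step_coset, step_coset by (try apply coset_act_word; assumption).
      f_equal. apply (coset_act_inv (g, back)); assumption.
  - destruct g.
    + rewrite (step_a back x hx).
      destruct (spin_domain _ _ _ a_in_family a_family_owner back x hx) as [hd _].
      rewrite (step_a _ _ hd).
      exact (spin_inv _ _ _ family_nodup a_in_family a_family_owner back x hx).
    + destruct (classic (x = one)) as [-> | hn].
      * rewrite step_one_b, step_base_b by reflexivity. reflexivity.
      * assert (hd0 : b_domain x) by (split; assumption).
        rewrite (step_b back x hd0).
        destruct (spin_domain _ _ _ b_in_family b_family_owner back x hd0) as [hd _].
        rewrite (step_b _ _ hd).
        exact (spin_inv _ _ _ family_nodup b_in_family b_family_owner back x hd0).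
Qed.

Lemma step_injective l x y : step l x = step l y -> x = y.
Proof. intro h. rewrite <- (step_inv l x), <- (step_inv l y), h. reflexivity. Qed.

(** ** Transitivity and faithfulness *)

Definition act (w : word) (x : H) : H :=
  act_word (step letter_a) (step letter_a') (step letter_b) (step letter_b') w x.

Lemma act_cons l w x : act (l :: w) x = step l (act w x).
Proof. destruct l as [[|] [|]]; reflexivity. Qed.

Lemma act_app w1 w2 x : act (w1 ++ w2) x = act w1 (act w2 x).
Proof.
  induction w1 as [|l w1 IH]; [reflexivity |]. simpl app. rewrite !act_cons, IH. reflexivity.
Qed.

Definition reach (x y : H) : Prop := exists w, act w x = y.

Lemma reach_refl x : reach x x.
Proof. exists []. reflexivity. Qed.

Lemma reach_trans x y z : reach x y -> reach y z -> reach x z.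
Proof. intros [w1 h1] [w2 h2]. exists (w2 ++ w1). rewrite act_app, h1, h2. reflexivity. Qed.

Lemma reach_step l x : reach x (step l x).
Proof. exists [l]. apply act_cons. Qed.

Lemma reach_sym x y : reach x y -> reach y x.
Proof.
  intros [w <-]. revert x. induction w as [|l w IH]; intro x; [apply reach_refl |].
  rewrite act_cons. apply (reach_trans _ (act w x)); [| apply IH].
  rewrite <- (step_inv l (act w x)) at 2. apply reach_step.
Qed.

Lemma reach_tree_parent x : ~ OnCosets x -> 0 < wlen x -> reach x (tree_parent x).
Proof.
  intros hx hl. destruct (tree_parent_step x hx hl) as [_ [_ [hpar _]]].
  assert (hv : In (tree_parent x) (family (tree_parent x))) by (left; reflexivity).
  destruct (Nat.even (wlen x)) eqn:ev.
  - assert (hd : b_domain x) by (split; [exact hx | intros ->; rewrite wlen_one in hl; lia]).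
    assert (ho : b_owner x = tree_parent x) by (unfold b_owner; rewrite ev; reflexivity).
    destruct (rotate_connects _ _ _ family_nodup b_in_family b_family_owner (step letter_b) x
                (tree_parent x) (fun z hz => step_b false z hz) hd) as [t ht];
      [rewrite ho; exact hv |].
    exists (repeat letter_b t). rewrite <- ht. clear ht.
    induction t as [|t IH]; [reflexivity |]. simpl repeat. rewrite act_cons, IH. reflexivity.
  - assert (ho : a_owner x = tree_parent x) by (unfold a_owner; rewrite ev; reflexivity).
    destruct (rotate_connects _ _ _ family_nodup a_in_family a_family_owner (step letter_a) x
                (tree_parent x) (fun z hz => step_a false z hz) hx) as [t ht];
      [rewrite ho; exact hv |].
    exists (repeat letter_a t). rewrite <- ht. clear ht.
    induction t as [|t IH]; [reflexivity |]. simpl repeat. rewrite act_cons, IH. reflexivity.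
Qed.

Lemma reach_one_tree x : ~ OnCosets x -> reach x one.
Proof.
  remember (wlen x) as n eqn:hn. revert x hn.
  induction n as [n IH] using lt_wf_ind. intros x hn hx.
  destruct n as [|n]; [rewrite (wlen_zero x (eq_sym hn)); apply reach_refl |].
  destruct (tree_parent_step x hx ltac:(lia)) as [hp [hlt _]].
  apply (reach_trans _ (tree_parent x)); [apply reach_tree_parent; [exact hx | lia] |].
  apply (IH (wlen (tree_parent x))); [lia | reflexivity | exact hp].
Qed.

(** Coset points reach the base coset by erasing letters, and then the identity by [b]. *)
Lemma reach_one_coset u : coset_word u -> reach (coset_pt u) one.
Proof.
  induction u as [|l u IH]; intro h.
  - rewrite <- (step_base_b letter_b) by reflexivity. apply reach_step.
  - apply (reach_trans _ (coset_pt u)); [| apply IH, (coset_word_tail l), h].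
    assert (e : step (linv l) (coset_pt (l :: u)) = coset_pt u).
    { rewrite step_coset, coset_act_linv_cons by (auto; discriminate). reflexivity. }
    rewrite <- e. apply reach_step.
Qed.

Lemma step_transitive : transitive_action (step letter_a) (step letter_a')
                                          (step letter_b) (step letter_b').
Proof.
  assert (hone : forall x, reach x one).
  { intro x. destruct (classic (OnCosets x)) as [[u [hu ->]] | hx].
    - apply reach_one_coset, hu.
    - apply reach_one_tree, hx. }
  intros x y. exact (reach_trans _ _ _ (hone x) (reach_sym _ _ (hone y))).
Qed.

Lemma act_coset v u : u <> [] -> coset_word (v ++ u) -> act v (coset_pt u) = coset_pt (v ++ u).
Proof.
  intro hn. induction v as [|l v IH]; intro h; [reflexivity |].
  simpl app in *. pose proof (coset_word_tail _ _ h) as ht.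
  assert (hne : v ++ u <> []) by (destruct v; [exact hn | discriminate]).
  rewrite act_cons, IH, step_coset, coset_act_cons by (try assumption; intro e; contradiction).
  reflexivity.
Qed.

(** A nontrivial reduced word [w] moves the coset point of [w]'s completion [[c]]. *)
Lemma step_faithful : faithful_action (step letter_a) (step letter_a')
                                      (step letter_b) (step letter_b').
Proof.
  intros w hr hn. destruct (coset_completion w hr) as [c [_ hc]].
  exists (coset_pt [c]). fold (act w (coset_pt [c])).
  rewrite act_coset by (discriminate || exact hc).
  intro e. apply coset_pt_inj in e. apply (f_equal (@length letter)) in e.
  rewrite length_app in e. destruct w; [contradiction | simpl in e; lia].
Qed.

(** ** Invariance of means *)

Section Invariance.
Context {mu : (H -> Prop) -> R} (Hmu : H_invariant_mean mul mu).
Let Hmean : is_mean mu := proj1 Hmu.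

(** The anchors are null: their far tails have many disjoint translates. *)
Lemma anchors_null : null mu (fun x => exists i, x = anchor i).
Proof.
  apply (null_sequence Hmu Hinf). intro k.
  destruct (infinite_nodup_list H (S k) Hinf) as [gs [hl hn]].
  exists (S (list_max (map wlen gs))), gs. split; [exact hl | apply anchor_tails_disjoint, hn].
Qed.

Definition exceptional : H -> Prop := set_union OnCosets (fun x => x = one).

Lemma exceptional_null : null mu exceptional.
Proof.
  apply null_union; [exact Hmean | | apply (null_singleton Hmu Hinf)].
  refine (null_sub Hmean _ _ _ anchors_null).
  intros x [u [_ ->]]. exists (word_code u). reflexivity.
Qed.

Lemma step_bounded l x : ~ exceptional x -> exists g, In g (ball 6) /\ step l x = mul g x.
Proof.
  intro hx. assert (hE : ~ OnCosets x /\ x <> one) by (unfold exceptional, set_union in hx; tauto).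
  destruct l as [[|] back].
  - rewrite (step_a back x (proj1 hE)).
    apply (family_step (a_owner x)); [apply a_in_family, hE |].
    exact (spin_cycle _ _ _ a_in_family back x (proj1 hE)).
  - rewrite (step_b back x hE).
    apply (family_step (b_owner x)); [apply b_in_family, hE |].
    exact (spin_cycle _ _ _ b_in_family back x hE).
Qed.

Lemma step_exceptional l x : exceptional x -> exceptional (step l x) \/ step l x = step l one.
Proof.
  intros [[u [hu ->]] | ->]; [left | right; reflexivity].
  destruct (classic (u = [] /\ fst l = false)) as [[-> hl] | hne].
  - right. rewrite step_base_b by exact hl. reflexivity.
  - left. rewrite step_coset by (try assumption; destruct (fst l); tauto).
    apply OnCosets_pt, coset_act_word, hu.
Qed.

Lemma step_preserves_mean l A : mu (image (step l) A) = mu A.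
Proof.
  apply (wobbling_invariance Hmu (step l) (ball 6) exceptional (step_injective l)
           exceptional_null); [| apply step_bounded].
  apply (null_sub Hmean _ (set_union exceptional (fun y => y = step l one))).
  - intros y [x [hx ->]]. destruct (step_exceptional l x hx); [left | right]; assumption.
  - apply null_union; [exact Hmean | exact exceptional_null | apply (null_singleton Hmu Hinf)].
Qed.

End Invariance.
End Construction.
End WordLength.
End Group.

Theorem theorem6p1 (H : Type) (mul : H -> H -> H) (one : H) (inv : H -> H)
  (HG : is_group mul one inv) (Hinf : infinite_type H)
  (Hfg : finitely_generated mul one inv) (Ham : amenable mul) :
  exists pa pai pb pbi : H -> H,
    is_perm pa pai /\ is_perm pb pbi /\
    faithful_action pa pai pb pbi /\ transitive_action pa pai pb pbi /\
    (forall mu : (H -> Prop) -> R, H_invariant_mean mul mu -> F2_invariant pa pai pb pbi mu).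
Proof.
  destruct Hfg as [Sg HS].
  set (step := step mul one inv Sg).
  exists (step letter_a), (step letter_a'), (step letter_b), (step letter_b').
  split; [split; intro x; apply (step_inv mul one inv HG Sg HS Hinf) |].
  split; [split; intro x; apply (step_inv mul one inv HG Sg HS Hinf) |].
  split; [apply (step_faithful mul one inv HG Sg HS Hinf) |].
  split; [apply (step_transitive mul one inv HG Sg HS Hinf) |].
  intros mu Hmu. apply (F2_invariant_of_letters (proj1 Hmu)).
  intros l A.
  replace (act_letter _ _ _ _ l) with (step l) by (destruct l as [[|] [|]]; reflexivity).
  apply (step_preserves_mean mul one inv HG Sg HS Hinf Hmu).
Qed.
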